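(* Let $Q\subseteq\{0,1\}^n$ be any finite set of query points (the queries of a non-adaptive deterministic algorithm). Then the distribution of the answer vector $(\mathbf f(x))_{x\in Q}$ when $\mathbf f\sim\mathcal D_{\mathrm{yes}}$ conditioned on the event $\overline{\mathsf{Bad}}$ is identical to its distribution when $\mathbf f\sim\mathcal D_{\mathrm{no}}$ conditioned on $\overline{\mathsf{Bad}}$.
   Context: Parameters: $c_1>0$ constant, $a=\sqrt n/\epsilon$, $m=n-a$, $L=0.1\cdot 2^{\sqrt m/\epsilon}$. For $B\subseteq[n]$, $x_B$ is the restriction of $x$ to $B$; $|z|$ is Hamming weight. On $\{0,1\}^A$: $h^{(+,0)}\equiv0$; $h^{(+,1)}(z)=1$ iff $|z|>a/2+c_1\sqrt a$ or $|z|<a/2-c_1\sqrt a$; $h^{(-,0)}(z)=1$ iff $|z|>a/2+c_1\sqrt a$; $h^{(-,1)}(z)=1$ iff $|z|<a/2-c_1\sqrt a$. Both $\mathcal D_{\mathrm{yes}}$ and $\mathcal D_{\mathrm{no}}$ draw: a uniform $\mathbf A\subseteq[n]$ of size $a$, $\mathbf C=[n]\setminus\mathbf A$; $\mathbf T=(\mathbf T_1,\dots,\mathbf T_L)$, each $\mathbf T_\ell\subseteq\mathbf C$ formed independently by $\sqrt m/\epsilon$ uniform draws from $\mathbf C$ with replacement; uniform $\mathbf b\in\{0,1\}^L$. Let $S_{\mathbf T}(y)=\{\ell:y_j=1\ \forall j\in\mathbf T_\ell\}$. The function is: $1$ if $|S_{\mathbf T}(x_{\mathbf C})|>1$ or $|x_{\mathbf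 C}|>m/2+0.05\epsilon\sqrt m$; otherwise $0$ if $|S_{\mathbf T}(x_{\mathbf C})|=0$ or $|x_{\mathbf C}|<m/2$; otherwise, with $S_{\mathbf T}(x_{\mathbf C})=\{\ell\}$, it equals $h^{(+,\mathbf b_\ell)}(x_{\mathbf A})$ for $\mathcal D_{\mathrm{yes}}$ and $h^{(-,\mathbf b_\ell)}(x_{\mathbf A})$ for $\mathcal D_{\mathrm{no}}$. The event $\mathsf{Bad}$ (depending on $\mathbf A,\mathbf T$ and $Q$) holds iff there exist $x,y\in Q$ and $\ell\in[L]$ with $S_{\mathbf T}(x_{\mathbf C})=S_{\mathbf T}(y_{\mathbf C})=\{\ell\}$, $|x_{\mathbf C}|,|y_{\mathbf C}|\in[m/2,m/2+0.05\epsilon\sqrt m]$, $|x_{\mathbf A}|<a/2-c_1\sqrt a$ and $|y_{\mathbf A}|>a/2+c_1\sqrt a$. *)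

From HB Require Import structures.
From mathcomp Require Import all_boot all_order all_algebra.
From mathcomp Require Import reals.
Set Implicit Arguments. Unset Strict Implicit. Unset Printing Implicit Defensive.
Import Order.TTheory GRing.Theory Num.Theory.
Local Open Scope ring_scope.

Definition point (n : nat) := {ffun 'I_n -> bool}.

Definition wt (n : nat) (B : {set 'I_n}) (x : point n) : nat :=
  #|[set i in B | x i]|.

(* Outcome of the random choices: (A, T, b), with T_l given as the
   sequence of its t draws (T l j = j-th draw of T_l). *)
Definition outcome (n t L : nat) : finType :=
  ({set 'I_n} * {ffun 'I_L -> {ffun 'I_t -> 'I_n}} * {ffun 'I_L -> bool})%type.

(* Probability weight of an outcome: A uniform of size a, each draw of each
   T_l uniform in C = [n] \ A (independently), b uniform in {0,1}^L. *)
Definition weight (R : realType) (n a t L : nat) (w : outcome n t L) : R :=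
  let: (A, T, b) := w in
  ((#|A| == a)%:R / ('C(n, a))%:R) *
  (\prod_(l < L) \prod_(j < t) ((T l j \notin A)%:R / (n - a)%:R)) *
  (2^-1) ^+ L.

Definition Pr (R : realType) (n a t L : nat) (E : pred (outcome n t L)) : R :=
  \sum_(w | E w) @weight R n a t L w.

Definition S_T (n t L : nat) (T : {ffun 'I_L -> {ffun 'I_t -> 'I_n}})
  (x : point n) : {set 'I_L} :=
  [set l | [forall j : 'I_t, x (T l j)]].

(* The functions h on {0,1}^A, as functions of |z| (z = x_A). *)
Definition hi (R : realType) (a : nat) (c1 : R) (w : nat) : bool :=
  (a%:R / 2 + c1 * Num.sqrt (a%:R : R) < w%:R).
Definition lo (R : realType) (a : nat) (c1 : R) (w : nat) : bool :=
  (w%:R < a%:R / 2 - c1 * Num.sqrt (a%:R : R)).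

(* yes = true gives h^{(+,b)}, yes = false gives h^{(-,b)}. *)
Definition h (R : realType) (yes : bool) (b : bool) (a : nat) (c1 : R) (w : nat) : bool :=
  if yes then (if b then hi a c1 w || lo a c1 w else false)
  else (if b then lo a c1 w else hi a c1 w).

Definition f (R : realType) (yes : bool) (n a t L : nat) (eps c1 : R)
  (w : outcome n t L) (x : point n) : bool :=
  let: (A, T, b) := w in
  let C := ~: A in
  let m : R := (n - a)%:R in
  let s := S_T T x in
  if (1 < #|s|)%N || (m / 2 + (5%:R / 100%:R) * eps * Num.sqrt m < (wt C x)%:R)
  then true
  else if (#|s| == 0)%N || ((wt C x)%:R < m / 2) then false
  else match [pick l in s] with
       | Some l => @h R yes (b l) a c1 (wt A x)
       | None => false
       end.

Definition Bad (R : realType) (n a t L : nat) (eps c1 : R)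
  (Q : {set point n}) (w : outcome n t L) : bool :=
  let: (A, T, _) := w in
  let C := ~: A in
  let m : R := (n - a)%:R in
  let inrange x := (m / 2 <= (wt C x)%:R) &&
                   ((wt C x)%:R <= m / 2 + (5%:R / 100%:R) * eps * Num.sqrt m) in
  [exists x in Q, exists y in Q, exists l : 'I_L,
     [&& S_T T x == [set l], S_T T y == [set l], inrange x, inrange y,
         lo a c1 (wt A x) & hi a c1 (wt A y)]].

Definition answer_prob (R : realType) (yes : bool) (n a t L : nat) (eps c1 : R)
  (Q : {set point n}) (v : point n -> bool) : R :=
  @Pr R n a t L (fun w => [forall x in Q, @f R yes n a t L eps c1 w x == v x]
                   && ~~ @Bad R n a t L eps c1 Q w) /
  @Pr R n a t L (fun w => ~~ @Bad R n a t L eps c1 Q w).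

From HB Require Import structures.
From mathcomp Require Import all_boot all_order all_algebra.
From mathcomp Require Import reals.
Set Implicit Arguments. Unset Strict Implicit. Unset Printing Implicit Defensive.
Import Order.TTheory GRing.Theory Num.Theory.
Local Open Scope ring_scope.

(* Call a line [l] marked if some query [x] in the window has S_T(x) = {l}
   and |x_A| low.  Flipping the bit b_l of every unmarked line is a
   weight-preserving involution of the outcomes that fixes A, T and hence
   Bad.  Off Bad, every query answered through line [l] has |x_A| not high
   if [l] is marked and not low otherwise, and in both cases
   h^{(-,b'_l)} = h^{(+,b_l)} for the flipped bit b'_l.  So the involution
   carries the D_yes answer events onto the D_no ones, whatever the values
   of the parameters n, a, t, L, eps, c1. *)

Lemma h_no_yes_not_hi (R : realType) (a : nat) (c1 : R) (b : bool) (w : nat) :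
  ~~ hi a c1 w -> h false b a c1 w = h true b a c1 w.
Proof. by move/negbTE=> nhi; case: b; rewrite /h ?nhi. Qed.

Lemma h_no_yes_not_lo (R : realType) (a : nat) (c1 : R) (b : bool) (w : nat) :
  ~~ lo a c1 w -> h false (~~ b) a c1 w = h true b a c1 w.
Proof. by move/negbTE=> nlo; case: b; rewrite /h ?nlo ?orbF. Qed.

Lemma Pr_involutive (R : realType) (n a t L : nat) (g : outcome n t L -> outcome n t L)
  (E : pred (outcome n t L)) :
  involutive g -> (forall w, weight R a (g w) = weight R a w) ->
  Pr R a E = Pr R a (fun w => E (g w)).
Proof.
move=> gK weight_g; rewrite /Pr (reindex_inj (inv_inj gK)) /=.
by apply: eq_bigr => w _; rewrite weight_g.
Qed.

Lemma set1_of_card_le1 (T : finType) (s : {set T}) (x : T) :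
  (#|s| <= 1)%N -> x \in s -> s = [set x].
Proof. by move=> s_le1 sx; apply/esym/eqP; rewrite eqEcard sub1set sx cards1. Qed.

Section FlipUnmarked.
Variables (R : realType) (n a t L : nat) (eps c1 : R) (Q : {set point n}).

Definition in_window (A : {set 'I_n}) (x : point n) : bool :=
  let m : R := (n - a)%:R in
  (m / 2 <= (wt (~: A) x)%:R) &&
  ((wt (~: A) x)%:R <= m / 2 + (5%:R / 100%:R) * eps * Num.sqrt m).

Definition marked (A : {set 'I_n}) (T : {ffun 'I_L -> {ffun 'I_t -> 'I_n}})
  (l : 'I_L) : bool :=
  [exists x in Q, [&& S_T T x == [set l], in_window A x & lo a c1 (wt A x)]].

Definition flip_unmarked (w : outcome n t L) : outcome n t L :=
  let: (A, T, b) := w in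
  (A, T, [ffun l => if marked A T l then b l else ~~ b l]).

Lemma flip_unmarkedK : involutive flip_unmarked.
Proof.
case=> [[A T] b] /=; congr (_, _, _); apply/ffunP=> l; rewrite !ffunE.
by case: (marked A T l); rewrite ?negbK.
Qed.

Lemma weight_flip_unmarked w : weight R a (flip_unmarked w) = weight R a w.
Proof. by case: w => [[A T] b]. Qed.

Lemma Bad_flip_unmarked w : Bad a eps c1 Q (flip_unmarked w) = Bad a eps c1 Q w.
Proof. by case: w => [[A T] b]. Qed.

Lemma marked_not_Bad_not_hi A T b l x : ~~ Bad a eps c1 Q (A, T, b) ->
  marked A T l -> x \in Q -> S_T T x = [set l] -> in_window A x ->
  ~~ hi a c1 (wt A x).
Proof.
move=> nBad /existsP[y /andP[yQ /and3P[Sy win_y lo_y]]] xQ Sx win_x.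
apply: contra nBad => hi_x; apply/existsP; exists y; rewrite yQ.
apply/existsP; exists x; rewrite xQ; apply/existsP; exists l.
move: win_y win_x; rewrite /in_window => /andP[-> ->] /andP[-> ->].
by rewrite Sy Sx eqxx lo_y hi_x.
Qed.

Lemma unmarked_not_lo A T l x : ~~ marked A T l -> x \in Q ->
  S_T T x = [set l] -> in_window A x -> ~~ lo a c1 (wt A x).
Proof.
move=> nmarked xQ Sx win_x; apply: contra nmarked => lo_x.
by apply/existsP; exists x; rewrite xQ Sx eqxx win_x lo_x.
Qed.

Lemma f_flip_unmarked w x : ~~ Bad a eps c1 Q w -> x \in Q ->
  f false a eps c1 (flip_unmarked w) x = f true a eps c1 w x.
Proof.
case: w => [[A T] b] nBad xQ; cbn -[h].
case: ifP => // /negbT; rewrite negb_or -leqNgt -leNgt => /andP[S_le1 below_top].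
case: ifP => // /negbT; rewrite negb_or -leNgt => /andP[_ above_bot].
case: pickP => // l Sl; rewrite ffunE.
have Sx : S_T T x = [set l] by exact: set1_of_card_le1.
have win_x : in_window A x by rewrite /in_window above_bot below_top.
case: ifP => [marked_l | /negbT nmarked_l].
- exact/h_no_yes_not_hi/(marked_not_Bad_not_hi nBad marked_l xQ Sx win_x).
- exact/h_no_yes_not_lo/(unmarked_not_lo nmarked_l xQ Sx win_x).
Qed.

End FlipUnmarked.

Theorem mainTheorem9 (R : realType) (n a t L : nat) (eps c1 : R)
  (Heps : 0 < eps) (Hc1 : 0 < c1)
  (Ha : a%:R = Num.sqrt (n%:R : R) / eps)
  (Ht : t%:R = Num.sqrt ((n - a)%:R : R) / eps)
  (HL : L = (2 ^ t %/ 10)%N)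
  (Q : {set point n}) (v : point n -> bool) :
  @answer_prob R true n a t L eps c1 Q v = @answer_prob R false n a t L eps c1 Q v.
Proof.
rewrite /answer_prob; congr (_ / _).
rewrite [RHS](Pr_involutive _ (flip_unmarkedK a eps c1 Q)); last exact: weight_flip_unmarked.
apply: eq_bigl => w /=; rewrite Bad_flip_unmarked.
case nBad: (Bad a eps c1 Q w); rewrite ?andbF //= !andbT.
by apply: eq_forallb_in => x xQ; rewrite f_flip_unmarked ?nBad.
Qed.
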